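(* Let $A$ be a meet-complemented lattice in which $\Box x$ and $\Diamond x$ exist for every $x\in A$. Then the following are equivalent: (i) $\Diamond\Box a\le\Box a$ for all $a\in A$; (ii) $\Diamond a\le\Box\Diamond a$ for all $a\in A$.
   Context: A meet-complemented lattice is a lattice $(L,\le)$ (not necessarily distributive) such that for every $a\in L$ the element $\neg a=\max\{b\in L: a\wedge b\le c\ \text{for all } c\in L\}$ exists; it is bounded with bottom $0$ and top $1$. For $a\in L$, $\Box a=\max\{b\in L: a\vee\neg b=1\}$ and $\Diamond a=\min\{b\in L: \neg a\vee b=1\}$. *)

From HB Require Import structures.
From mathcomp Require Import all_boot all_order.
Set Implicit Arguments. Unset Strict Implicit. Unset Printing Implicit Defensive.
Import Order.TTheory.
Local Open Scope order_scope.

Definition is_max {d} {L : porderType d} (P : L -> Prop) (m : L) : Prop :=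
  P m /\ forall b, P b -> b <= m.
Definition is_min {d} {L : porderType d} (P : L -> Prop) (m : L) : Prop :=
  P m /\ forall b, P b -> m <= b.

Definition is_meet_compl {d} {L : tbLatticeType d} (neg : L -> L) : Prop :=
  forall a, is_max (fun b => forall c : L, a `&` b <= c) (neg a).

Definition is_box {d} {L : tbLatticeType d} (neg box : L -> L) : Prop :=
  forall a, is_max (fun b => a `|` neg b = \top) (box a).

Definition is_diamond {d} {L : tbLatticeType d} (neg dia : L -> L) : Prop :=
  forall a, is_min (fun b => neg a `|` b = \top) (dia a).

From HB Require Import structures.
From mathcomp Require Import all_boot all_order.
Set Implicit Arguments. Unset Strict Implicit. Unset Printing Implicit Defensive.
Import Order.TTheory.
Local Open Scope order_scope.

(* Both [dia b <= a] and [b <= box a] amount to [neg b `|` a = \top], since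
   [neg] is antitone; so [dia] is left adjoint to [box].  The equivalence then
   holds for any Galois connection [f -| g]: condition (i) at [a] reads
   [f (f (g a)) <= a], condition (ii) at [a] reads [f (f a) <= f a], and each
   yields the other through the unit [a <= g (f a)] and counit [f (g a) <= a]. *)

Section GaloisConnection.

Variables (d : Order.disp_t) (T : porderType d) (f g : T -> T).
Hypothesis fg_adj : forall a b, f b <= a <-> b <= g a.

Lemma le_gf a : a <= g (f a).
Proof. exact/fg_adj. Qed.

Lemma fg_le a : f (g a) <= a.
Proof. exact/fg_adj. Qed.

Lemma adjoint_homo : {homo f : x y / x <= y}.
Proof. by move=> x y xy; apply/fg_adj; apply: le_trans xy (le_gf y). Qed.

Lemma fg_le_g_iff_f_le_gf :
  (forall a, f (g a) <= g a) <-> (forall a, f a <= g (f a)).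
Proof.
split=> H a.
- apply/(fg_adj (f a)).
  have ffa : f (f a) <= f (f (g (f a))) by apply/adjoint_homo/adjoint_homo/le_gf.
  by apply: (le_trans ffa); apply/(fg_adj (f a))/H.
- apply/(fg_adj a); apply: le_trans (fg_le a).
  exact/(fg_adj (f (g a)))/H.
Qed.

End GaloisConnection.

Lemma join_top_homo_r d (L : tbLatticeType d) (x y z : L) :
  x `|` y = \top -> y <= z -> x `|` z = \top.
Proof.
move=> xy_top yz; apply/eqP; rewrite eq_le lex1 -xy_top /=.
by rewrite leUx leUl (le_trans yz) ?leUr.
Qed.

Section MeetComplemented.

Variables (d : Order.disp_t) (A : tbLatticeType d) (neg box dia : A -> A).
Hypotheses (Hneg : is_meet_compl neg) (Hbox : is_box neg box)
  (Hdia : is_diamond neg dia).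

Lemma neg_anti x y : x <= y -> neg y <= neg x.
Proof.
move=> xy; apply: (proj2 (Hneg x)) => c.
apply: le_trans (proj1 (Hneg y) c).
by rewrite lexI leIr andbT (le_trans _ xy) ?leIl.
Qed.

Lemma dia_box_adj a b : dia b <= a <-> b <= box a.
Proof.
split=> H.
- by apply: (proj2 (Hbox a)); rewrite joinC (join_top_homo_r (proj1 (Hdia b))).
- apply: (proj2 (Hdia b)); rewrite joinC.
  exact: join_top_homo_r (proj1 (Hbox a)) (neg_anti H).
Qed.

End MeetComplemented.

Theorem proposition19 (d : Order.disp_t) (A : tbLatticeType d)
  (neg box dia : A -> A)
  (Hneg : is_meet_compl neg) (Hbox : is_box neg box) (Hdia : is_diamond neg dia) :
  (forall a : A, dia (box a) <= box a) <-> (forall a : A, dia a <= box (dia a)).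
Proof. exact/fg_le_g_iff_f_le_gf/dia_box_adj. Qed.
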